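(* Let $T\in\mathcal{BC}(X)$, $s\in\rho_S(T)$, and for $m\ge1$ set $$\mathcal M_m^L(s,T):=\sum_{i=0}^{m-1}\bar T^iS_L^{-1}(s,T)s^{m-i-1},\qquad \mathcal M_m^R(s,T):=\sum_{i=0}^{m-1}s^{m-i-1}S_R^{-1}(s,T)\bar T^i.$$ Then for every $m\ge1$, $$\mathcal Q_{c,s}(T)^{-1}s^m-\bar T^m\mathcal Q_{c,s}(T)^{-1}=\mathcal M_m^L(s,T)\quad\text{and}\quad s^m\mathcal Q_{c,s}(T)^{-1}-\mathcal Q_{c,s}(T)^{-1}\bar T^m=\mathcal M_m^R(s,T).$$
   Context: $\mathbb H$ denotes the quaternions with units $e_1,e_2,e_3$. $X=X_{\mathbb R}\otimes\mathbb H$ is a two-sided quaternionic Banach module over a real Banach space $X_{\mathbb R}$; $\mathcal{BC}(X)$ is the set of $T=T_0+T_1e_1+T_2e_2+T_3e_3$ with $T_i\in\mathcal B(X_{\mathbb R})$ pairwise commuting; $\bar T=T_0-\sum_{i=1}^3T_ie_i$; $\mathcal Q_{c,s}(T)=s^2\mathcal I-s(T+\bar T)+T\bar T$. $\rho_S(T)$ is the set of $s\in\mathbb H$ for which $\mathcal Q_{c,s}(T)$ has a bounded inverse. The (commutative) $S$-resolvent operators are $S_L^{-1}(s,T)=(s\mathcal I-\bar T)\mathcal Q_{c,s}(T)^{-1}$ and $S_R^{-1}(s,T)=\mathcal Q_{c,s}(T)^{-1}(s\mathcal I-\bar T)$. *)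

From HB Require Import structures.
From mathcomp Require Import all_boot all_order all_algebra.
From mathcomp Require Import all_classical all_reals topology normedtype.
Set Implicit Arguments. Unset Strict Implicit. Unset Printing Implicit Defensive.
Import Order.TTheory GRing.Theory Num.Theory.
Local Open Scope ring_scope.

Record quat (R : Type) := Quat { q0 : R; q1 : R; q2 : R; q3 : R }.

Record qop (R : realType) (V : normedModType R) := QOp {
  op0 : {linear V -> V}; op1 : {linear V -> V};
  op2 : {linear V -> V}; op3 : {linear V -> V} }.

Section QuaternionicOperators.
Variables (R : realType) (V : normedModType R).

(* X = X_R (x) H, an element x = x0 + x1 e1 + x2 e2 + x3 e3 (x_j in X_R)
   is represented by the 4-tuple (x0, x1, x2, x3). *)
Definition X := (V * V * V * V)%type.

(* left multiplication by the imaginary units *)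
Definition mulE1 (x : X) : X := let: (a, b, c, d) := x in (- b, a, - d, c).
Definition mulE2 (x : X) : X := let: (a, b, c, d) := x in (- c, d, a, - b).
Definition mulE3 (x : X) : X := let: (a, b, c, d) := x in (- d, - c, b, a).

Definition qlmul (s : quat R) (x : X) : X :=
  q0 s *: x + q1 s *: mulE1 x + q2 s *: mulE2 x + q3 s *: mulE3 x.

Definition qpow (s : quat R) (m : nat) : X -> X := iter m (qlmul s).

Definition compw (A : V -> V) (x : X) : X :=
  let: (a, b, c, d) := x in (A a, A b, A c, A d).

Definition tcomp (T : qop V) (i : 'I_4) : V -> V :=
  match val i with 0 => op0 T | 1 => op1 T | 2 => op2 T | _ => op3 T end%N.

Definition Top (T : qop V) (x : X) : X :=
  compw (op0 T) x + mulE1 (compw (op1 T) x) + mulE2 (compw (op2 T) x)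
  + mulE3 (compw (op3 T) x).

Definition Tbar (T : qop V) (x : X) : X :=
  compw (op0 T) x - mulE1 (compw (op1 T) x) - mulE2 (compw (op2 T) x)
  - mulE3 (compw (op3 T) x).

Definition BC (T : qop V) : Prop :=
  (forall i, continuous (tcomp T i)) /\
  (forall i j, tcomp T i \o tcomp T j =1 tcomp T j \o tcomp T i).

Definition Qcs (s : quat R) (T : qop V) (x : X) : X :=
  qpow s 2 x - qlmul s (Top T x + Tbar T x) + Top T (Tbar T x).

Definition rhoS (T : qop V) (s : quat R) : Prop :=
  exists Qi : X -> X, [/\ cancel (Qcs s T) Qi, cancel Qi (Qcs s T)
                        & continuous Qi].

Definition SL (Qi : X -> X) (s : quat R) (T : qop V) (x : X) : X :=
  qlmul s (Qi x) - Tbar T (Qi x).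
Definition SR (Qi : X -> X) (s : quat R) (T : qop V) (x : X) : X :=
  Qi (qlmul s x - Tbar T x).

Definition ML (Qi : X -> X) (s : quat R) (T : qop V) (m : nat) (x : X) : X :=
  \sum_(i < m) iter i (Tbar T) (SL Qi s T (qpow s (m - i.+1) x)).
Definition MR (Qi : X -> X) (s : quat R) (T : qop V) (m : nat) (x : X) : X :=
  \sum_(i < m) qpow s (m - i.+1) (SR Qi s T (iter i (Tbar T) x)).

End QuaternionicOperators.

From HB Require Import structures.
From mathcomp Require Import all_boot all_order all_algebra.
From mathcomp Require Import all_classical all_reals topology normedtype.
Set Implicit Arguments.
Unset Strict Implicit.
Unset Printing Implicit Defensive.
Import Order.TTheory GRing.Theory Num.Theory.
Local Open Scope ring_scope.

(* Write T = T0 + v and bar T = T0 - v with v = e1 T1 + e2 T2 + e3 T3.  Since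
   the units e_i anticommute and square to -1 while the T_i commute with each
   other and with the e_i, v^2 = -(T1^2 + T2^2 + T3^2); hence
   Q_{c,s}(T) = s^2 - 2 s T0 + T0^2 + T1^2 + T2^2 + T3^2 has only real operator
   coefficients, commutes with left multiplication by s, and so does its
   inverse.  Both identities are then telescoping sums, the noncommutative
   analogue of a^m - b^m = sum_i b^i (a - b) a^(m-1-i). *)

Lemma can2_commute (aT : Type) (f g h : aT -> aT) : cancel f g -> cancel g f ->
  (forall x, f (h x) = h (f x)) -> forall x, g (h x) = h (g x).
Proof. by move=> fK gK fh x; apply: (canLR fK); rewrite fh gK. Qed.

Section ZmodEndomorphisms.
Variable W : zmodType.

Lemma iter_zmod_morphism n (f : W -> W) :
  zmod_morphism f -> zmod_morphism (iter n f).
Proof. by move=> fB; elim: n => [|n IHn] x y //=; rewrite IHn fB. Qed.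

Lemma iter_subXXl (A B P : W -> W) :
    zmod_morphism B -> (forall y, P (A y) = A (P y)) -> forall m x,
  P (iter m A x) - iter m B (P x) =
  \sum_(i < m) iter i B (A (P (iter (m - i.+1) A x)) - B (P (iter (m - i.+1) A x))).
Proof.
move=> BB PA m x; pose f k := iter k B (P (iter (m - k) A x)).
have -> : P (iter m A x) - iter m B (P x) = - (f m - f 0%N).
  by rewrite opprB /f subn0 subnn.
rewrite -telescope_sumr // big_mkord -sumrN; apply: eq_bigr => i _.
rewrite opprB (iter_zmod_morphism _ BB) /f -iterSr; congr (_ - _).
by rewrite -PA -iterS subnSK.
Qed.

Lemma iter_subXXr (A B P : W -> W) :
    zmod_morphism A -> zmod_morphism P -> (forall y, P (A y) = A (P y)) ->
  forall m x, iter m A (P x) - P (iter m B x) =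
  \sum_(i < m) iter (m - i.+1) A (P (A (iter i B x) - B (iter i B x))).
Proof.
move=> AB PB PA m x; pose f k := iter (m - k) A (P (iter k B x)).
have -> : iter m A (P x) - P (iter m B x) = - (f m - f 0%N).
  by rewrite opprB /f subn0 subnn.
rewrite -telescope_sumr // big_mkord -sumrN; apply: eq_bigr => i _.
rewrite opprB PB (iter_zmod_morphism _ AB) /f -iterS; congr (_ - _).
by rewrite PA -iterSr subnSK.
Qed.

Lemma sumr_antisym_diag n (F : 'I_n -> 'I_n -> W) :
    (forall i j, i != j -> F j i = - F i j) ->
  \sum_i \sum_j F i j = \sum_i F i i.
Proof.
elim: n F => [|n IHn] F FN; first by rewrite !big_ord0.
have cross : \sum_(j < n) F ord_max (widen_ord (leqnSn n) j)
           = - \sum_(i < n) F (widen_ord (leqnSn n) i) ord_max.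
  by rewrite -sumrN; apply: eq_bigr => i _; rewrite FN // neq_ltn /= ltn_ord.
under eq_bigr do rewrite big_ord_recr /=.
rewrite big_split /= !big_ord_recr /= cross subrKA IHn // => i j ij.
by apply: FN; rewrite -val_eqE /= val_eqE.
Qed.

Lemma sqr_sum_anticomm n (e t : 'I_n -> {additive W -> W}) x :
    (forall i j y, i != j -> e j (e i y) = - e i (e j y)) ->
    (forall i y, e i (e i y) = - y) ->
    (forall i j y, t i (e j y) = e j (t i y)) ->
    (forall i j y, t i (t j y) = t j (t i y)) ->
  \sum_i e i (t i (\sum_j e j (t j x))) = - \sum_i t i (t i x).
Proof.
move=> eA e2 te tt.
have -> : \sum_i e i (t i (\sum_j e j (t j x)))
        = \sum_i \sum_j e i (e j (t i (t j x))).
  by apply: eq_bigr => i _; rewrite !raddf_sum; apply: eq_bigr => j _; rewrite te.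
rewrite (@sumr_antisym_diag n (fun i j => e i (e j (t i (t j x))))) -?sumrN.
  by apply: eq_bigr => i _; rewrite e2.
by move=> i j ij; rewrite tt eA.
Qed.

Lemma raddf_commute_subD (S : {additive W -> W}) (A B C : W -> W) x :
    (forall y, S (A y) = A (S y)) -> (forall y, S (B y) = B (S y)) ->
    (forall y, S (C y) = C (S y)) ->
  S (A x - B x + C x) = A (S x) - B (S x) + C (S x).
Proof. by move=> SA SB SC; rewrite raddfD raddfB SA SB SC. Qed.

End ZmodEndomorphisms.

Section QuaternionicModule.
Variables (R : realType) (V : normedModType R).
Implicit Types (x y : X V) (s : quat R) (T : qop V).
Local Notation E1 := (@mulE1 R V).
Local Notation E2 := (@mulE2 R V).
Local Notation E3 := (@mulE3 R V).

Lemma quadP r (a b c d a' b' c' d' : V) :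
  r *: ((a, b, c, d) : X V) + (a', b', c', d') =
  (r *: a + a', r *: b + b', r *: c + c', r *: d + d').
Proof. by []. Qed.

Lemma quadN (a b c d : V) : - ((a, b, c, d) : X V) = (- a, - b, - c, - d).
Proof. by []. Qed.

Lemma mulE1_is_linear : linear E1.
Proof.
by move=> r [[[a b] c] d] [[[a' b'] c'] d']; rewrite quadP /mulE1 /= quadP !scalerN !opprD.
Qed.
HB.instance Definition _ := GRing.isLinear.Build R (X V) (X V) _ E1 mulE1_is_linear.

Lemma mulE2_is_linear : linear E2.
Proof.
by move=> r [[[a b] c] d] [[[a' b'] c'] d']; rewrite quadP /mulE2 /= quadP !scalerN !opprD.
Qed.
HB.instance Definition _ := GRing.isLinear.Build R (X V) (X V) _ E2 mulE2_is_linear.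

Lemma mulE3_is_linear : linear E3.
Proof.
by move=> r [[[a b] c] d] [[[a' b'] c'] d']; rewrite quadP /mulE3 /= quadP !scalerN !opprD.
Qed.
HB.instance Definition _ := GRing.isLinear.Build R (X V) (X V) _ E3 mulE3_is_linear.

Lemma compw_is_linear (A : {linear V -> V}) : linear (compw A).
Proof.
by move=> r [[[a b] c] d] [[[a' b'] c'] d']; rewrite quadP /compw /= quadP !linearP.
Qed.
HB.instance Definition _ (A : {linear V -> V}) :=
  GRing.isLinear.Build R (X V) (X V) _ (compw A) (compw_is_linear A).

(* Each of the following operators is convertible to a combination of linear
   maps built with \+, \-, \*: and \o, whose linearity the library knows. *)
Lemma qlmul_is_linear s : linear (@qlmul R V s).
Proof.
move=> r x y.
exact: (linearP (q0 s \*: idfun \+ q1 s \*: E1 \+ q2 s \*: E2 \+ q3 s \*: E3) r x y).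
Qed.
HB.instance Definition _ s :=
  GRing.isLinear.Build R (X V) (X V) _ (@qlmul R V s) (qlmul_is_linear s).

Lemma Top_is_linear T : linear (Top T).
Proof.
move=> r x y; exact: (linearP (compw (op0 T) \+ (E1 \o compw (op1 T))
  \+ (E2 \o compw (op2 T)) \+ (E3 \o compw (op3 T))) r x y).
Qed.
HB.instance Definition _ T :=
  GRing.isLinear.Build R (X V) (X V) _ (Top T) (Top_is_linear T).

Lemma Tbar_is_linear T : linear (Tbar T).
Proof.
move=> r x y; exact: (linearP (compw (op0 T) \- (E1 \o compw (op1 T))
  \- (E2 \o compw (op2 T)) \- (E3 \o compw (op3 T))) r x y).
Qed.
HB.instance Definition _ T :=
  GRing.isLinear.Build R (X V) (X V) _ (Tbar T) (Tbar_is_linear T).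

Lemma Qcs_is_linear s T : linear (Qcs s T).
Proof.
move=> r x y; exact: (linearP ((qlmul s \o qlmul s) \- (qlmul s \o (Top T \+ Tbar T))
  \+ (Top T \o Tbar T)) r x y).
Qed.
HB.instance Definition _ s T :=
  GRing.isLinear.Build R (X V) (X V) _ (Qcs s T) (Qcs_is_linear s T).

Definition qunit (i : 'I_3) : {linear X V -> X V} :=
  match val i with 0 => E1 | 1 => E2 | _ => E3 end%N.

Lemma qunit_anticomm i j y : i != j -> qunit j (qunit i y) = - qunit i (qunit j y).
Proof.
case: y => [[[a b] c] d]; move: i j; do 2![case=> -[|[|[|//]]] ?] => //= _.
all: by rewrite [RHS]quadN ?opprK.
Qed.

Lemma qunit_sqr i y : qunit i (qunit i y) = - y.
Proof.
case: y => [[[a b] c] d]; case: i => -[|[|[|//]]] ? /=.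
all: by rewrite [RHS]quadN ?opprK.
Qed.

Lemma compw_comm (A B : V -> V) y : (forall v, A (B v) = B (A v)) ->
  compw A (compw B y) = compw B (compw A y).
Proof. by case: y => [[[a b] c] d] AB; rewrite /compw !AB. Qed.

Lemma compw_qunit (A : {additive V -> V}) i y :
  compw A (qunit i y) = qunit i (compw A y).
Proof.
case: y => [[[a b] c] d]; case: i => -[|[|[|//]]] ? /=.
all: by rewrite /mulE1 /mulE2 /mulE3 /compw !raddfN.
Qed.

Lemma qlmulE s (a b c d : V) : qlmul s ((a, b, c, d) : X V) =
  (q0 s *: a + q1 s *: - b + q2 s *: - c + q3 s *: - d,
   q0 s *: b + q1 s *: a + q2 s *: d + q3 s *: - c,
   q0 s *: c + q1 s *: - d + q2 s *: a + q3 s *: b,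
   q0 s *: d + q1 s *: c + q2 s *: - b + q3 s *: a).
Proof. by []. Qed.

Lemma qlmul_compw s (A : {linear V -> V}) x :
  qlmul s (compw A x) = compw A (qlmul s x).
Proof.
by case: x => [[[a b] c] d]; rewrite /compw /= !qlmulE !linearD !linearN !linearZZ.
Qed.

Definition Tim T (i : 'I_3) : {linear V -> V} :=
  match val i with 0 => op1 T | 1 => op2 T | _ => op3 T end%N.

Definition vecpart T x := \sum_i qunit i (compw (Tim T i) x).

Lemma Top_vecpart T x : Top T x = compw (op0 T) x + vecpart T x.
Proof. by rewrite /vecpart !big_ord_recr big_ord0 /= add0r !addrA. Qed.

Lemma Tbar_vecpart T x : Tbar T x = compw (op0 T) x - vecpart T x.
Proof. by rewrite /vecpart !big_ord_recr big_ord0 /= add0r !opprD !addrA. Qed.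

Lemma Top_add_Tbar T x : Top T x + Tbar T x = compw (op0 T) x + compw (op0 T) x.
Proof. by rewrite Top_vecpart Tbar_vecpart addrACA subrr addr0. Qed.

Section CommutingComponents.
Variables (T : qop V) (hT : BC T).

Lemma Tim_tcomp i : Tim T i =1 tcomp T (lift ord0 i).
Proof. by case: i => -[|[|[|//]]]. Qed.

Lemma Tim_comm i j v : Tim T i (Tim T j v) = Tim T j (Tim T i v).
Proof. by rewrite !Tim_tcomp; apply: hT.2. Qed.

Lemma op0_Tim_comm i v : op0 T (Tim T i v) = Tim T i (op0 T v).
Proof. by rewrite !Tim_tcomp; apply: (hT.2 ord0). Qed.

Lemma vecpart_sqr x :
  vecpart T (vecpart T x) = - \sum_i compw (Tim T i) (compw (Tim T i) x).
Proof.
apply: (@sqr_sum_anticomm _ 3 qunit (fun i => compw (Tim T i))).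
- exact: qunit_anticomm.
- exact: qunit_sqr.
- by move=> i j y /=; apply: compw_qunit.
- by move=> i j y /=; apply: compw_comm => v; apply: Tim_comm.
Qed.

Lemma compw_op0_vecpart x :
  compw (op0 T) (vecpart T x) = vecpart T (compw (op0 T) x).
Proof.
rewrite /vecpart raddf_sum; apply: eq_bigr => i _.
rewrite -compw_comm; first exact: compw_qunit.
exact: op0_Tim_comm.
Qed.

Lemma Top_Tbar x : Top T (Tbar T x) =
  compw (op0 T) (compw (op0 T) x) + \sum_i compw (Tim T i) (compw (Tim T i) x).
Proof.
rewrite Tbar_vecpart (raddfB (Top T)) /= !Top_vecpart compw_op0_vecpart.
by rewrite addrKA vecpart_sqr opprK.
Qed.

Lemma Qcs_qlmul s x : Qcs s T (qlmul s x) = qlmul s (Qcs s T x).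
Proof.
symmetry; apply: (@raddf_commute_subD _ (qlmul s) (fun y => qlmul s (qlmul s y))
  (fun y => qlmul s (Top T y + Tbar T y)) (fun y => Top T (Tbar T y))) => // y.
  by rewrite !Top_add_Tbar; congr (qlmul s _); rewrite (raddfD (qlmul s)) /= !qlmul_compw.
rewrite !Top_Tbar (raddfD (qlmul s)) (raddf_sum (qlmul s)) /= !qlmul_compw; congr (_ + _).
by apply: eq_bigr => i _; rewrite !qlmul_compw.
Qed.

End CommutingComponents.
End QuaternionicModule.

Theorem theorem6p3 (R : realType) (V : completeNormedModType R)
    (T : qop V) (s : quat R) (hT : BC T) (hs : rhoS T s)
    (Qi : X V -> X V) (hQ1 : cancel (Qcs s T) Qi) (hQ2 : cancel Qi (Qcs s T))
    (m : nat) (hm : (1 <= m)%N) :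
  (forall x : X V, Qi (qpow s m x) - iter m (Tbar T) (Qi x) = ML Qi s T m x) /\
  (forall x : X V, qpow s m (Qi x) - Qi (iter m (Tbar T) x) = MR Qi s T m x).
Proof.
have Qi_qlmul := can2_commute hQ1 hQ2 (Qcs_qlmul hT s).
rewrite /ML /SL /MR /SR /qpow; split=> x.
  exact: iter_subXXl (raddfB (Tbar T)) Qi_qlmul m x.
exact: iter_subXXr (raddfB (@qlmul R V s)) (can2_zmod_morphism hQ1 hQ2) Qi_qlmul m x.
Qed.
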